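(* Let $\ell$ and $m$ be positive integers with $2\le \ell\le m$, let $G$ be a torsion-free abelian group written multiplicatively, and let $\mathcal{A}=(A_1,\dots,A_m)$ be a sequence of nonempty finite subsets of $G$. Put $A=A_1\cup\cdots\cup A_m$. Then \[ |\Pi^{\ell}(\mathcal{A})| \ \ge\ \sum_{a\in A}\mu_{\mathcal{A}}(a)-\ell+1, \] and this lower bound is best possible (there exist such sequences for which equality holds).
   Context: For $S\subseteq G$, $\chi_S$ is the indicator function of $S$. For $a\in A$, $\mu_{\mathcal{A}}(a)=\min\big(\ell,\sum_{j=1}^m\chi_{A_j}(a)\big)$. $\Pi^{\ell}(\mathcal{A})$ is the set of all products $a_{i_1}\cdots a_{i_\ell}$ with $i_1,\dots,i_\ell\in[1,m]$ pairwise distinct and $a_{i_j}\in A_{i_j}$ (since $G$ is abelian, the order is irrelevant). $[x,y]=\{n\in\mathbb{Z}:x\le n\le y\}$. *)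

(* mathcomp + finmap.  The group G is written additively as a
   zmodType (abelian group); the paper writes it multiplicatively, so products
   a_{i_1}...a_{i_l} become sums. *)
From HB Require Import structures.
From mathcomp Require Import all_boot all_order all_algebra.
From mathcomp Require Export finmap.
Set Implicit Arguments. Unset Strict Implicit. Unset Printing Implicit Defensive.
Import GRing.Theory.
Local Open Scope ring_scope.
Local Open Scope fset_scope.

Definition torsion_free (G : zmodType) : Prop :=
  forall (x : G) (n : nat), x *+ n.+1 = 0 -> x = 0.

Definition union_fam (G : zmodType) (m : nat) (A : 'I_m -> {fset G}) : {fset G} :=
  \big[fsetU/fset0]_(j < m) A j.

Definition mu (G : zmodType) (l m : nat) (A : 'I_m -> {fset G}) (a : G) : nat :=
  minn l (\sum_(j < m) (a \in A j)).

(* Pi^l(A): all "products" (here sums) a_{i_1} + ... + a_{i_l} with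
   i_1,...,i_l pairwise distinct indices in [1,m] and a_{i_k} in A_{i_k}.
   An element is encoded by an injective index map i : 'I_l -> 'I_m together
   with a choice a : 'I_l -> (union of the A_j) such that a k \in A (i k). *)
Definition Pi_index (G : zmodType) (l m : nat) (A : 'I_m -> {fset G}) :=
  ({ffun 'I_l -> 'I_m} * {ffun 'I_l -> union_fam A})%type.

Definition Pi_ok (G : zmodType) (l m : nat) (A : 'I_m -> {fset G})
  (p : Pi_index l A) : bool :=
  injectiveb p.1 && [forall k, val (p.2 k) \in A (p.1 k)].

Definition Pi_val (G : zmodType) (l m : nat) (A : 'I_m -> {fset G})
  (p : Pi_index l A) : G := \sum_(k < l) val (p.2 k).

Definition Pi (G : zmodType) (l m : nat) (A : 'I_m -> {fset G}) : {fset G} :=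
  [fset Pi_val p | p in enum (@Pi_ok G l m A)].

(* Since G is torsion-free, the finite set U = A_1 ∪ ... ∪ A_m carries a
   rational weight psi that is injective on U and respects every integer
   relation among its elements (a generic vector orthogonal to the rational
   span of the relations), so equal sums of elements of U have equal weights.

   The bound then follows by induction on |A_1| + ... + |A_m|.  Delete an
   element y of maximal weight from some A_j: from the whole union when more
   than l of the A_j are nonempty, and otherwise from an A_j with at least two
   elements.  This lowers the sum of the mu(a) by at most one, and only when y
   lies in at most l of the A_j; in that case the heaviest l-sum of the family
   is lost, since any realisation of it after the deletion could be made
   strictly heavier by swapping in y.  The induction ends with l singletons and
   empty sets, where the bound is clear.  Equality holds when every A_j is {0}. *)

From HB Require Import structures.
From mathcomp Require Import all_boot all_order all_algebra finmap.
From mathcomp Require Import zify ring.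
From Stdlib Require Import Classical.

Set Implicit Arguments. Unset Strict Implicit. Unset Printing Implicit Defensive.
Import Order.TTheory GRing.Theory Num.Theory.
Local Open Scope ring_scope.

Section Families.
Local Open Scope fset_scope.
Variables (G : zmodType) (m : nat).
Implicit Types (A B : 'I_m -> {fset G}) (j : 'I_m) (x y : G).

Definition occ A x : nat := (\sum_j (x \in A j))%N.

Definition supp A : {set 'I_m} := [set j | A j != fset0].

Definition total_size A : nat := (\sum_j #|` A j|)%N.

Definition fam_del A j y : 'I_m -> {fset G} :=
  fun i => if i == j then A j `\ y else A i.

Lemma mem_union_fam A j x : x \in A j -> x \in union_fam A.
Proof. by move=> xA; apply/bigfcupP; exists j; rewrite ?mem_index_enum. Qed.

Lemma sub_union_fam A j : A j `<=` union_fam A.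
Proof. by apply/fsubsetP => x /mem_union_fam; apply. Qed.

Lemma fam_del_sub A j y i : fam_del A j y i `<=` A i.
Proof. by rewrite /fam_del; case: eqP => [->|_]; rewrite ?fsubsetDl. Qed.

Section Delete.
Variables (A : 'I_m -> {fset G}) (j : 'I_m) (y : G).
Hypothesis yA : y \in A j.

Lemma total_size_del : total_size A = (total_size (fam_del A j y)).+1.
Proof.
rewrite /total_size (bigD1 j) //= [in RHS](bigD1 j) //= (cardfsD1 y (A j)) yA.
rewrite /fam_del eqxx; congr (_ + _)%N.
by apply: eq_bigr => i /negPf ->.
Qed.

Lemma occ_del : occ A y = (occ (fam_del A j y) y).+1.
Proof.
rewrite /occ (bigD1 j) //= [in RHS](bigD1 j) //= yA /fam_del eqxx.
rewrite in_fsetD1 eqxx; congr (_ + _)%N.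
by apply: eq_bigr => i /negPf ->.
Qed.

Lemma occ_del_neq x : x != y -> occ (fam_del A j y) x = occ A x.
Proof.
move=> xy; apply: eq_bigr => i _; rewrite /fam_del.
by case: eqP => [->|_]; rewrite ?in_fsetD1 ?xy.
Qed.

Lemma supp_del_sub : supp (fam_del A j y) \subset supp A.
Proof.
apply/subsetP => i; rewrite !inE; apply: contraNN => /eqP Ai0.
by rewrite -fsubset0 -Ai0 fam_del_sub.
Qed.

Lemma supp_del_ge : (#|supp A| <= #|supp (fam_del A j y)|.+1)%N.
Proof.
apply: (@leq_trans #|j |: supp (fam_del A j y)|); last first.
  by rewrite cardsU1; case: (_ \notin _).
apply: subset_leq_card; apply/subsetP => i; rewrite !inE /fam_del.
by case: (eqVneq i j) => //= _ ->; rewrite orbT.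
Qed.

Lemma supp_del_eq : fam_del A j y j != fset0 -> supp (fam_del A j y) = supp A.
Proof.
move=> A'j; apply/eqP; rewrite eqEsubset supp_del_sub; apply/subsetP => i.
by rewrite !inE; case: (eqVneq i j) => [->|ij] //; rewrite /fam_del (negPf ij).
Qed.

End Delete.

Lemma union_fam_const (B : {fset G}) : (0 < m)%N -> union_fam (fun _ : 'I_m => B) = B.
Proof.
move=> m_gt0; apply/fsetP => x; apply/bigfcupP/idP => [[] // | xB].
by exists (Ordinal m_gt0); rewrite ?mem_index_enum.
Qed.

Lemma sum_occ (U : {fset G}) A : (forall i, A i `<=` U) ->
  (\sum_(x <- U) occ A x)%N = total_size A.
Proof.
move=> AU; rewrite /occ exchange_big; apply: eq_bigr => i _.
rewrite -(big_fset_incl _ (AU i)) /=; last by move=> x _ /negPf ->.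
by rewrite (eq_big_seq (fun _ => 1%N)) ?sum1_size // => x ->.
Qed.

Lemma total_size_supp A : (forall i, #|` A i| <= 1)%N -> total_size A = #|supp A|.
Proof.
move=> A1; rewrite /total_size -sum1_card [RHS]big_mkcond /=; apply: eq_bigr => i _.
by rewrite inE -cardfs_gt0; have := A1 i; case: #|` A i| => [|[]].
Qed.

Section Sums.
Variable l : nat.

Lemma PiP A s :
  reflect (exists i : 'I_l -> 'I_m, exists a : 'I_l -> G,
            [/\ injective i, forall k, a k \in A (i k) & s = \sum_k a k])
          (s \in Pi l A).
Proof.
apply: (iffP idP).
  case/imfsetP => /= p; rewrite mem_enum => /andP[/injectiveP inj /forallP ok] ->.
  by exists p.1, (fun k => val (p.2 k)); split.
case=> i [a [inj ok ->]].
have aU k : a k \in union_fam A by apply: mem_union_fam (ok k).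
apply/imfsetP; exists ([ffun k => i k], [ffun k => [` aU k]]).
  rewrite mem_enum /Pi_ok /=; apply/andP; split.
    by apply/injectiveP => x z; rewrite !ffunE; apply: inj.
  by apply/forallP => k; rewrite !ffunE /=.
by apply: eq_bigr => k _; rewrite ffunE.
Qed.

Lemma Pi_sub A B : (forall i, B i `<=` A i) -> Pi l B `<=` Pi l A.
Proof.
move=> BA; apply/fsubsetP => s /PiP [i [a [inj ok ->]]].
by apply/PiP; exists i, a; split=> // k; apply: (fsubsetP (BA _)).
Qed.

Lemma supp_distinct_choice A : (l <= #|supp A|)%N ->
  exists i : 'I_l -> 'I_m, exists a : 'I_l -> G,
    injective i /\ forall k, a k \in A (i k).
Proof.
move=> lA; pose i k := enum_val (widen_ord lA k).
have inj : injective i by move=> x z /enum_val_inj /(congr1 val) /= /val_inj.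
have ne k : exists x, x \in A (i k).
  by apply/fset0Pn; have := enum_valP (widen_ord lA k); rewrite inE.
by have [a ha] := fin_all_exists ne; exists i, a.
Qed.

Lemma Pi_const0 : (l <= m)%N -> Pi l (fun _ : 'I_m => [fset 0 : G]) = [fset 0].
Proof.
move=> lm; apply/fsetP => x; rewrite inE; apply/PiP/eqP => [[i [a [_ a0 ->]]] | ->].
  by apply: big1 => k _; apply/eqP; rewrite -in_fset1 a0.
exists (widen_ord lm), (fun _ => 0); split; last by rewrite big1.
- by move=> p q /(congr1 val) /= /val_inj.
- by move=> k; rewrite inE.
Qed.

Lemma Pi_gt0 A : (l <= #|supp A|)%N -> (0 < #|` Pi l A|)%N.
Proof.
move=> /supp_distinct_choice [i [a [inj ok]]]; rewrite cardfs_gt0.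
by apply/fset0Pn; exists (\sum_k a k); apply/PiP; exists i, a.
Qed.

Lemma occ_ge A (i : 'I_l -> 'I_m) x :
  injective i -> (forall k, x \in A (i k)) -> (l <= occ A x)%N.
Proof.
move=> inj xA; have -> : occ A x = #|[set j | x \in A j]|.
  rewrite /occ -sum1_card [RHS]big_mkcond /=.
  by apply: eq_bigr => j _; rewrite inE; case: (_ \in _).
rewrite -[X in (X <= _)%N]card_ord -(card_imset _ inj); apply: subset_leq_card.
by apply/subsetP => _ /imsetP [k _ ->]; rewrite inE.
Qed.

Lemma supp_gt A (i : 'I_l -> 'I_m) (a : 'I_l -> G) j :
  injective i -> (forall k, a k \in A (i k)) -> (forall k, i k != j) ->
  A j != fset0 -> (l < #|supp A|)%N.
Proof.
move=> inj ok ij Aj; have <- : #|j |: (i @: 'I_l)| = l.+1.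
  rewrite cardsU1 (card_imset _ inj) card_ord.
  by case: imsetP => // -[k _ /eqP]; rewrite eq_sym (negPf (ij k)).
apply: subset_leq_card; apply/subsetP => x; rewrite !inE.
case/orP => [/eqP -> // | /imsetP [k _ ->]].
by apply/fset0Pn; exists (a k).
Qed.

End Sums.
End Families.

Section Weights.
Local Open Scope fset_scope.
Variables (R : realDomainType) (G : zmodType) (m l : nat).
Variables (U : {fset G}) (psi : G -> R).
Hypothesis psi_inj : {in U &, injective psi}.
Hypothesis psi_sum : forall a b : 'I_l -> G,
  (forall k, a k \in U) -> (forall k, b k \in U) ->
  \sum_k a k = \sum_k b k -> \sum_k psi (a k) = \sum_k psi (b k).
Implicit Types (A B : 'I_m -> {fset G}).

Lemma fset_argmax (B : {fset G}) : B != fset0 ->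
  exists2 y, y \in B & forall z, z \in B -> psi z <= psi y.
Proof.
case/fset0Pn => z zB.
have [t _ tmax] := @arg_maxP _ _ _ [` zB] xpredT (fun t : B => psi (val t)) isT.
exists (val t); first exact: fsvalP.
by move=> w wB; apply: (tmax [` wB]).
Qed.

Definition rep : finType := ({ffun 'I_l -> 'I_m} * {ffun 'I_l -> U})%type.

Definition rep_in A (p : rep) : bool :=
  injectiveb p.1 && [forall k, val (p.2 k) \in A (p.1 k)].

Definition rep_weight (p : rep) : R := \sum_k psi (val (p.2 k)).

Lemma rep_of_choice A (i : 'I_l -> 'I_m) (a : 'I_l -> G) :
  (forall j, A j `<=` U) -> injective i -> (forall k, a k \in A (i k)) ->
  exists p, [/\ rep_in A p, rep_weight p = \sum_k psi (a k)
              & \sum_k val (p.2 k) = \sum_k a k].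
Proof.
move=> AU inj ok; have aU k : a k \in U by apply: (fsubsetP (AU (i k))).
exists ([ffun k => i k], [ffun k => [` aU k]]); split.
- apply/andP; split; first by apply/injectiveP => x z; rewrite !ffunE; apply: inj.
  by apply/forallP => k; rewrite !ffunE /=.
- by apply: eq_bigr => k _; rewrite ffunE.
- by apply: eq_bigr => k _; rewrite ffunE.
Qed.

Definition heavier_in A (w : R) :=
  exists i : 'I_l -> 'I_m, exists a : 'I_l -> G,
    [/\ injective i, forall k, a k \in A (i k) & w < \sum_k psi (a k)].

Definition heavier_choice B A :=
  forall (i : 'I_l -> 'I_m) (a : 'I_l -> G),
    injective i -> (forall k, a k \in B (i k)) -> heavier_in A (\sum_k psi (a k)).

(* The heaviest l-sum of A is not an l-sum of B: since its weight depends
   only on its value, any realisation in B could be made heavier in A. *)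
Lemma card_Pi_heavier B A :
  (forall j, A j `<=` U) -> (forall j, B j `<=` A j) ->
  (l <= #|supp A|)%N -> heavier_choice B A ->
  (#|` Pi l B| < #|` Pi l A|)%N.
Proof.
move=> AU BA lA heavier; apply: fproper_ltn_card; rewrite fproperE Pi_sub //=.
have [i0 [a0 [inj0 ok0]]] := supp_distinct_choice lA.
have [p0 [p0A _ _]] := rep_of_choice AU inj0 ok0.
have [p pA pmax] := @arg_maxP _ _ _ p0 (rep_in A) rep_weight p0A.
move: pA => /andP[/injectiveP pinj /forallP pok].
apply/negP => /fsubsetP PiBA.
have /PiBA/PiP [i [a [inj ok psum]]] : \sum_k val (p.2 k) \in Pi l A.
  by apply/PiP; exists p.1, (fun k => val (p.2 k)).
have [i' [a' [inj' ok' lt_w]]] := heavier i a inj ok.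
have [q [qA qw _]] := rep_of_choice AU inj' ok'.
have := pmax q qA; rewrite qw.
have -> : rep_weight p = \sum_k psi (a k).
  apply: psi_sum psum => k; first exact: fsvalP.
  by apply: (fsubsetP (AU (i k))); apply: (fsubsetP (BA (i k))).
by move=> /(lt_le_trans lt_w); rewrite ltxx.
Qed.

Definition mu_sum A : nat := (\sum_(x <- U) mu l A x)%N.

Section Delete.
Variables (A : 'I_m -> {fset G}) (j : 'I_m) (y : G).
Hypothesis AU : forall i, A i `<=` U.
Hypothesis yA : y \in A j.
Hypothesis ymax : forall z, z \in A j -> psi z <= psi y.
Let A' := fam_del A j y.

Lemma mu_sum_del : (mu_sum A <= mu_sum A' + (occ A y <= l))%N.
Proof.
have yU : y \in U by apply: (fsubsetP (AU j)).
rewrite /mu_sum !(bigD1_seq y yU (fset_uniq U)) /=.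
have -> : (\sum_(x <- U | x != y) mu l A' x = \sum_(x <- U | x != y) mu l A x)%N.
  by apply: eq_bigr => x xy; rewrite /mu -!/(occ _ _) occ_del_neq.
set S := (\sum_(_ <- _ | _) _)%N.
rewrite /mu -!/(occ _ _) (occ_del yA); set c := occ A' y.
by case: (leqP c.+1 l) => /= ?; lia.
Qed.

Lemma heavier_swap (i : 'I_l -> 'I_m) (a : 'I_l -> G) k0 :
  injective i -> (forall k, a k \in A' (i k)) ->
  (forall k, k != k0 -> i k != j) -> psi (a k0) < psi y ->
  heavier_in A (\sum_k psi (a k)).
Proof.
move=> inj ok ij lt_y.
exists (fun k => if k == k0 then j else i k), (fun k => if k == k0 then y else a k).
split.
- move=> x z /=; case: (eqVneq x k0) => [->|xk]; case: (eqVneq z k0) => [->|zk] //.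
  + by move=> e; have := ij z zk; rewrite -e eqxx.
  + by move=> e; have := ij x xk; rewrite e eqxx.
  + exact: inj.
- by move=> k; case: eqP => // _; apply: (fsubsetP (fam_del_sub _ _ _ _)); apply: ok.
- rewrite (bigD1 k0) //= [X in _ < X](bigD1 k0) //= eqxx.
  under [X in (_ < _ + X)%R]eq_bigr => k /negPf kk0 do rewrite kk0.
  by rewrite ltrD2r.
Qed.

Lemma psi_lt_of_neq i z : z \in A i -> z != y -> psi z <= psi y -> psi z < psi y.
Proof.
move=> zA zy; rewrite le_eqVlt => /orP[/eqP e|//]; move: zy.
have [zU yU] := (fsubsetP (AU i) z zA, fsubsetP (AU j) y yA).
by rewrite (psi_inj zU yU e) eqxx.
Qed.

Lemma heavier_del : (occ A y <= l)%N ->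
  (forall i z, z \in A i -> psi z <= psi y) \/
    (#|supp A| <= l)%N /\ A' j != fset0 ->
  heavier_choice A' A.
Proof.
move=> yl cases i a inj ok.
have aA k : a k \in A (i k) by apply: (fsubsetP (fam_del_sub _ _ _ _)); apply: ok.
case: (pickP (fun k => i k == j)) => [k0 /eqP ik0 | ij].
  apply: (heavier_swap (k0 := k0) inj ok).
    by move=> k; apply: contra_neq => ikj; apply: inj; rewrite ikj.
  have := ok k0; rewrite ik0 /A' /fam_del eqxx in_fsetD1 => /andP[ay aj].
  by apply: (psi_lt_of_neq (i := j)) => //; apply: ymax.
have ij' k : i k != j by rewrite ij.
case: cases => [ymax_all | [suppA A'j]].
  case: (pickP (fun k => a k != y)) => [k0 ay | ally].
    apply: (heavier_swap (k0 := k0) inj ok); first by move=> k _.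
    by apply: (psi_lt_of_neq (aA k0)) => //; apply: ymax_all (aA k0).
  exfalso; have : (l <= occ A' y)%N.
    apply: (occ_ge inj) => k; have /negbFE/eqP <- := ally k; exact: ok.
  by rewrite (occ_del yA) -/A' in yl; lia.
exfalso; have := supp_gt inj ok ij' A'j; have := supp_del_sub A j y.
by move/subset_leq_card; rewrite -/A'; lia.
Qed.

Lemma mu_sum_bound_del :
  (l <= #|supp A'|)%N ->
  (forall i z, z \in A i -> psi z <= psi y) \/
    (#|supp A| <= l)%N /\ A' j != fset0 ->
  (mu_sum A' + 1 <= #|` Pi l A'| + l)%N ->
  (mu_sum A + 1 <= #|` Pi l A| + l)%N.
Proof.
move=> lA' cases IH; have := mu_sum_del.
case: (leqP (occ A y) l) => yl /= le_mu.
  have lA : (l <= #|supp A|)%N.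
    exact: leq_trans lA' (subset_leq_card (supp_del_sub A j y)).
  have := card_Pi_heavier AU (fam_del_sub A j y) lA (heavier_del yl cases).
  by move: IH; set PA := #|` Pi l A|; set PA' := #|` Pi l _|; lia.
have := fsubset_leq_card (Pi_sub l (fam_del_sub A j y)).
by move: IH; set PA := #|` Pi l A|; set PA' := #|` Pi l _|; lia.
Qed.

End Delete.

Lemma mu_sum_bound_singletons A : (forall i, A i `<=` U) ->
  (forall i, #|` A i| <= 1)%N -> #|supp A| = l ->
  (mu_sum A + 1 <= #|` Pi l A| + l)%N.
Proof.
move=> AU A1 suppA; have Pi_pos := Pi_gt0 (eq_leq (esym suppA)).
have : (mu_sum A <= l)%N.
  rewrite -suppA -total_size_supp // -(sum_occ AU).
  by apply: leq_sum => x _; apply: geq_minr.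
by lia.
Qed.

Lemma mu_sum_bound A : (forall i, A i `<=` U) -> (l <= #|supp A|)%N ->
  (mu_sum A + 1 <= #|` Pi l A| + l)%N.
Proof.
have [n] := ubnP (total_size A); elim: n A => // n IH A sA AU lA.
have IH_del j y : y \in A j -> (l <= #|supp (fam_del A j y)|)%N ->
    (mu_sum (fam_del A j y) + 1 <= #|` Pi l (fam_del A j y)| + l)%N.
  move=> yA lA'; apply: IH lA'; first by rewrite (total_size_del yA) in sA.
  by move=> i; apply: fsubset_trans (fam_del_sub _ _ _ _) (AU i).
have [ltA | geA] := ltnP l #|supp A|.
  have [j0] : exists j0, j0 \in supp A by apply/set0Pn; rewrite -card_gt0; lia.
  rewrite inE => /fset0Pn [z zA].
  have /fset_argmax [x /bigfcupP [j _ xA] xmax] : union_fam A != fset0.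
    by apply/fset0Pn; exists z; apply: mem_union_fam zA.
  apply: (mu_sum_bound_del AU xA (fun w wA => xmax w (mem_union_fam wA))).
  - by have := supp_del_ge A j x; lia.
  - by left => i w wA; apply: xmax (mem_union_fam wA).
  - by apply: IH_del xA _; have := supp_del_ge A j x; lia.
have [j A2 | A1] := pickP (fun i => 1 < #|` A i|)%N; last first.
  by apply: mu_sum_bound_singletons => // [i|]; [rewrite leqNgt A1 | lia].
have /fset_argmax [y yA ymax] : A j != fset0 by rewrite -cardfs_gt0 ltnW.
have A'j : fam_del A j y j != fset0.
  by rewrite /fam_del eqxx -cardfs_gt0; move: A2; rewrite (cardfsD1 y) yA.
have supp_eq := supp_del_eq A'j.
apply: (mu_sum_bound_del AU yA ymax); rewrite ?supp_eq //; first by right.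
by apply: IH_del yA _; rewrite supp_eq.
Qed.

End Weights.

Lemma torsion_free_mulrz (G : zmodType) (x : G) (k : int) :
  torsion_free G -> 0 < k -> x *~ k = 0 -> x = 0.
Proof. by move=> tfG; case: k => [[|k]|k] //= _; apply: tfG. Qed.

(* t exceeds every root -p.1 / p.2 in absolute value. *)
Lemma affine_nonroot (R : numFieldType) (s : seq (R * R)) :
  (forall p, p \in s -> (p.1 != 0) || (p.2 != 0)) ->
  exists t : R, forall p, p \in s -> p.1 + t * p.2 != 0.
Proof.
move=> s_nz; pose root (p : R * R) := - p.1 / p.2.
exists (1 + \sum_(q <- s) `|root q|) => p ps.
have [p2_0 | p2_nz] := eqVneq p.2 0.
  by have := s_nz p ps; rewrite p2_0 mulr0 addr0 eqxx orbF.
apply/negP; rewrite addrC addr_eq0 -(divfK p2_nz (- p.1)) -/(root p).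
rewrite (inj_eq (mulIf p2_nz)) => /eqP tE.
have : `|root p| <= \sum_(q <- s) `|root q|.
  by rewrite (big_rem p ps) /= lerDl sumr_ge0.
by rewrite -tE ger0_norm ?addr_ge0 ?sumr_ge0 // gerDr ler10.
Qed.

Lemma sum_comp_fiber (V : nmodType) (I J : finType) (g : I -> J) (f : J -> V) :
  \sum_k f (g k) = \sum_j f j *+ #|[pred k | g k == j]|.
Proof.
rewrite (partition_big g xpredT) //=; apply: eq_bigr => j _.
by rewrite -sumr_const; apply: eq_big => [k|k /eqP ->]; rewrite ?inE.
Qed.

Section Relations.
Variables (G : zmodType) (n : nat) (u : 'I_n -> G).

Definition is_relation (c : 'rV[int]_n) : bool := \sum_i u i *~ c 0 i == 0.

Definition ratmx N (M : 'M[int]_(N, n)) : 'M[rat]_(N, n) := map_mx intr M.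

Definition respects_relations (w : 'I_n -> rat) :=
  forall c, is_relation c -> \sum_i (c 0 i)%:~R * w i = 0.

(* Each relation outside the current span raises its rank, which is at most n. *)
Lemma relations_span : exists N, exists M : 'M[int]_(N, n),
  (forall t, is_relation (row t M)) /\
  forall c, is_relation c -> (ratmx c <= ratmx M)%MS.
Proof.
suff [N [M [Mrel [rkM | Mspan]]]] : exists N, exists M : 'M[int]_(N, n),
    (forall t, is_relation (row t M)) /\
    ((n.+1 <= \rank (ratmx M))%N \/ forall c, is_relation c -> (ratmx c <= ratmx M)%MS).
- by have := rank_leq_col (ratmx M); lia.
- by exists N, M.
elim: n.+1 => [|k [N [M [Mrel [rkM | Mspan]]]]].
- by exists 0%N, 0; split; [case | left].
- case: (classic (forall c, is_relation c -> (ratmx c <= ratmx M)%MS)) => [Mspan|].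
    by exists N, M; split => //; right.
  move=> /not_all_ex_not [c ncM].
  have [crel cM] := Classical_Prop.imply_to_and _ _ ncM.
  exists (1 + N)%N, (col_mx c M); split.
    move=> t; rewrite /is_relation -(splitK t); case: (split t) => t' /=.
      rewrite (ord1 t'); move: crel; rewrite /is_relation.
      by under eq_bigr => i _ do rewrite mxE col_mxEu.
    under eq_bigr => i _ do rewrite mxE col_mxEd.
    rewrite (eq_bigr (fun i => u i *~ row t' M 0 i)); first exact: Mrel.
    by move=> i _; rewrite mxE.
  left; apply: leq_ltn_trans rkM _.
  have /rank_ltmx : (ratmx M < ratmx c + ratmx M)%MS.
    rewrite ltmxE addsmxSr /=; apply/negP => /(submx_trans (addsmxSl _ _)).
    exact: cM.
  by rewrite addsmxE /ratmx map_col_mx.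
- by exists N, M; split => //; right.
Qed.

Definition diff_row (i j : 'I_n) : 'rV[int]_n := delta_mx 0 i - delta_mx 0 j.

Lemma sum_mulrz_delta (i : 'I_n) : \sum_k u k *~ (delta_mx 0 i : 'rV[int]_n) 0 k = u i.
Proof.
rewrite (bigD1 i) //= mxE !eqxx big1 ?addr0 // => k /negPf ki.
by rewrite mxE ki andbF mulr0z.
Qed.

Hypothesis G_torsion_free : torsion_free G.
Hypothesis u_inj : injective u.

(* Clearing denominators, a rational combination of relations equal to
   e_i - e_j gives K (u i - u j) = 0 for some K > 0. *)
Lemma diff_row_notin_relations N (M : 'M[int]_(N, n)) (i j : 'I_n) :
  (forall t, is_relation (row t M)) -> i != j ->
  ~~ (ratmx (diff_row i j) <= ratmx M)%MS.
Proof.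
move=> Mrel ij; apply/negP => /submxP [x e].
pose r t := x 0 t.
pose K : int := \prod_t denq (r t).
pose z t : int := numq (r t) * \prod_(t' | t' != t) denq (r t').
have zE t : (z t)%:~R = K%:~R * r t.
  by rewrite /z /K [in RHS](bigD1 t) //= !intrM numqE; ring.
have KE i' : K * diff_row i j 0 i' = \sum_t z t * M t i'.
  apply: (@intr_inj rat); rewrite intrM rmorph_sum /=.
  move/matrixP: e => /(_ 0 i'); rewrite /ratmx !mxE /= => ->.
  by rewrite mulr_sumr; apply: eq_bigr => t _; rewrite intrM zE mxE /r; ring.
have K_gt0 : 0 < K by apply: prodr_gt0 => t _; apply: denq_gt0.
suff /(torsion_free_mulrz G_torsion_free K_gt0) /eqP : (u i - u j) *~ K = 0.
  by rewrite subr_eq0 => /eqP /u_inj ij'; move: ij; rewrite ij' eqxx.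
have -> : u i - u j = \sum_i' u i' *~ diff_row i j 0 i'.
  under eq_bigr => i' _ do rewrite mxE [X in (_ + X)%R]mxE mulrzBr.
  by rewrite sumrB !sum_mulrz_delta.
rewrite mulrz_suml; under eq_bigr => i' _ do rewrite -mulrzA mulrC KE mulrz_sumr.
rewrite exchange_big big1 //= => t _.
under eq_bigr => i' _ do rewrite mulrC mulrzA.
rewrite -mulrz_suml; move/eqP: (Mrel t).
by under eq_bigr => i' _ do rewrite mxE; move=> ->; rewrite mul0rz.
Qed.

Lemma separating_weight i j : i != j ->
  exists w, respects_relations w /\ w i != w j.
Proof.
move=> ij; have [N [M [Mrel Mspan]]] := relations_span.
have := diff_row_notin_relations Mrel ij; rewrite submxE; set C := cokermx _.
move=> dC; have [k dCk] : exists k, (ratmx (diff_row i j) *m C) 0 k != 0.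
  apply/existsP; apply: contraNT dC; rewrite negb_exists => /forallP dC0.
  by apply/eqP/matrixP => a b; rewrite (ord1 a) [RHS]mxE; apply/eqP/negbNE/dC0.
exists (fun a => C a k); split.
  move=> c /Mspan; rewrite submxE => /eqP /matrixP /(_ 0 k); rewrite !mxE.
  by under eq_bigr => a _ do rewrite /ratmx mxE.
move: dCk; rewrite /ratmx /diff_row map_mxB !map_delta_mx mulmxBl -!rowE.
by rewrite !mxE subr_eq0.
Qed.

Lemma respects_relations0 : respects_relations (fun _ => 0).
Proof. by move=> c _; rewrite big1 // => i _; rewrite mulr0. Qed.

Lemma respects_relationsD w1 w2 t :
  respects_relations w1 -> respects_relations w2 ->
  respects_relations (fun a => w1 a + t * w2 a).
Proof.
move=> w1rel w2rel c crel; under eq_bigr => i _ do rewrite mulrDr mulrCA.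
by rewrite big_split /= w1rel // -mulr_sumr w2rel // mulr0 addr0.
Qed.

(* A generic combination w + t w' of a weight w separating the pairs of P
   and a weight w' separating one more pair separates them all. *)
Lemma weight_separating_pairs (P : seq ('I_n * 'I_n)) :
  (forall p, p \in P -> p.1 != p.2) ->
  exists w, respects_relations w /\ forall p, p \in P -> w p.1 != w p.2.
Proof.
elim: P => [|p P IH] P_neq.
  by exists (fun _ => 0); split; [apply: respects_relations0 | move=> ?].
have [w [wrel wP]] :
    exists w, respects_relations w /\ forall q, q \in P -> w q.1 != w q.2.
  by apply: IH => q qP; apply: P_neq; rewrite in_cons qP orbT.
have [w' [w'rel w'p]] := separating_weight (P_neq p (mem_head _ _)).
pose d (v : 'I_n -> rat) (q : 'I_n * 'I_n) := v q.1 - v q.2.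
have /affine_nonroot [t tP] : forall x, x \in [seq (d w q, d w' q) | q <- p :: P] ->
    (x.1 != 0) || (x.2 != 0).
  move=> _ /mapP [q qpP ->]; move: qpP; rewrite in_cons /d !subr_eq0.
  by case/orP => [/eqP -> | /wP ->] //; rewrite w'p orbT.
exists (fun a => w a + t * w' a); split; first exact: respects_relationsD.
move=> q /(map_f (fun q => (d w q, d w' q))) /tP /=; apply: contraNneq => e.
have -> : d w q + t * d w' q = w q.1 + t * w' q.1 - (w q.2 + t * w' q.2).
  by rewrite /d; ring.
by rewrite e subrr.
Qed.

Lemma respects_relations_sum w : respects_relations w ->
  forall l (ia ib : 'I_l -> 'I_n),
  \sum_k u (ia k) = \sum_k u (ib k) -> \sum_k w (ia k) = \sum_k w (ib k).
Proof.
move=> wrel l ia ib sum_ab.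
pose c : 'rV[int]_n :=
  \row_i (#|[pred k | ia k == i]|%:Z - #|[pred k | ib k == i]|%:Z).
have crel : is_relation c.
  rewrite /is_relation; under eq_bigr => i _ do rewrite mxE mulrzBl_nat -!pmulrn.
  by rewrite sumrB -!sum_comp_fiber subr_eq0 sum_ab.
have := wrel c crel.
under eq_bigr => i _ do rewrite mxE intrB mulrBl -!pmulrn !mulr_natl.
by rewrite sumrB -!sum_comp_fiber => /eqP; rewrite subr_eq0 => /eqP.
Qed.

Lemma injective_respecting_weight :
  exists w : 'I_n -> rat, injective w /\ respects_relations w.
Proof.
pose P := [seq p <- enum {: 'I_n * 'I_n} | p.1 != p.2].
have [|w [wrel wP]] := @weight_separating_pairs P.
  by move=> p; rewrite mem_filter => /andP[].
exists w; split => // x y wxy; apply/eqP; apply: contraT => xy.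
by have := wP (x, y); rewrite mem_filter xy mem_enum wxy eqxx => /(_ isT).
Qed.

End Relations.

Lemma rat_weight_exists (G : zmodType) (U : {fset G}) : torsion_free G ->
  exists psi : G -> rat, {in U &, injective psi} /\
  forall l (a b : 'I_l -> G), (forall k, a k \in U) -> (forall k, b k \in U) ->
    \sum_k a k = \sum_k b k -> \sum_k psi (a k) = \sum_k psi (b k).
Proof.
move=> tfG; pose u (i : 'I_#|{: U}|) : G := val (enum_val i).
have u_inj : injective u by move=> i j /val_inj /enum_val_inj.
have uU x : x \in U -> exists i, u i = x.
  by move=> xU; exists (enum_rank [` xU]%fset); rewrite /u enum_rankK.
have [w [w_inj wrel]] := injective_respecting_weight tfG u_inj.
pose psi (x : G) := \sum_i (u i == x)%:R * w i.
have psi_u j : psi (u j) = w j.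
  rewrite /psi (bigD1 j) //= eqxx mul1r big1 ?addr0 // => i ij.
  by rewrite (inj_eq u_inj) (negPf ij) mul0r.
exists psi; split.
  by move=> x y /uU [i <-] /uU [j <-]; rewrite !psi_u => /w_inj ->.
move=> l a b aU bU.
have [ia aE] := fin_all_exists (fun k => uU _ (aU k)).
have [ib bE] := fin_all_exists (fun k => uU _ (bU k)).
rewrite -(eq_bigr _ (fun k _ => aE k)) -(eq_bigr _ (fun k _ => bE k)).
rewrite -(eq_bigr _ (fun k _ => congr1 psi (aE k))).
rewrite -(eq_bigr _ (fun k _ => congr1 psi (bE k))).
move/(respects_relations_sum wrel).
by rewrite (eq_bigr _ (fun k _ => psi_u (ia k))) (eq_bigr _ (fun k _ => psi_u (ib k))).
Qed.

Theorem corollary1p6 (l m : nat) (Hl : (2 <= l)%N) (Hlm : (l <= m)%N)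
  (G : zmodType) (HG : torsion_free G) :
  (forall A : 'I_m -> {fset G}, (forall j, A j != fset0) ->
     ((\sum_(a <- union_fam A) mu l A a)%N%:Z - l%:Z + 1 <= (#|` Pi l A|)%:Z)%R)
  /\
  (exists A : 'I_m -> {fset G}, (forall j, A j != fset0) /\
     (#|` Pi l A|)%:Z = (\sum_(a <- union_fam A) mu l A a)%N%:Z - l%:Z + 1).
Proof.
split.
  move=> A A_nz; have [psi [psi_inj psi_sum]] := rat_weight_exists (union_fam A) HG.
  have suppA : #|supp A| = m.
    by rewrite -[RHS]card_ord -cardsT; apply: eq_card => j; rewrite !inE A_nz.
  have := mu_sum_bound psi_inj (psi_sum l) (@sub_union_fam _ _ A).
  by rewrite suppA /mu_sum => /(_ Hlm); lia.
exists (fun _ => [fset 0]%fset); split => [j|].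
  by apply/fset0Pn; exists 0; rewrite inE.
rewrite Pi_const0 // union_fam_const; last by lia.
rewrite cardfs1 big_seq_fset1 /mu.
have -> : (\sum_(j < m) ((0%R : G) \in [fset 0%R : G]%fset))%N = m.
  rewrite (eq_bigr (fun _ => 1%N)) ?sum1_card ?card_ord // => j _.
  by rewrite in_fset1 eqxx.
by rewrite (minn_idPl Hlm); lia.
Qed.
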